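(* Let $p$ be a prime and let $f:\mathbb{Z}_p\times\mathbb{Z}_p\to\mathbb{Z}_p$ be additively inseparable. Then for all $n,m\ge1$ and every function $F:\mathbb{Z}_p^n\times\mathbb{Z}_p^m\to\mathbb{Z}_p$ there is a protocol with the following properties. Alice, holding $\vec x\in\mathbb{Z}_p^n$, and Bob, holding $\vec y\in\mathbb{Z}_p^m$, share finitely many copies of $P^f$ and shared randomness, and do not communicate. On every input, Alice outputs $a$ and Bob outputs $b$ with $a-b=F(\vec x,\vec y)$ with probability $1$. Consequently, given access to copies of $P^f$, Bob can compute $F(\vec x,\vec y)$ with certainty after Alice sends him a single element of $\mathbb{Z}_p$. Thus the deterministic communication complexity of every such $F$ becomes trivial.
   Context: Let $p$ be a prime. All arithmetic on elements of $\mathbb{Z}_p$ is modulo $p$. A box is a conditional probability distribution $P(a,b\mid x,y)$ with $a,b,x,y\in\mathbb{Z}_p$. It is shared by Alice, who supplies $x$ and receives $a$, and Bob, who supplies $y$ and receives $b$. Different copies act independently. For $f:\mathbb{Z}_p\times\mathbb{Z}_p\to\mathbb{Z}_p$, the functional box is $P^f(a,b\mid x,y)=1/p$ if $a-b=f(x,y)$, and $0$ otherwise. A function $f$ is additively separable if $f(x,y)=g(x)+h(y)$ for some $g,h:\mathbb{Z}_p\to\mathbb{Z}_p$. Otherwise it is additively inseparable. In a protocol, each party's inputs to the box copies may depend on their own input, the shared randomness, and their own previously obtained box outputs. *)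

From HB Require Import structures.
From mathcomp Require Import all_boot all_order all_algebra.
Set Implicit Arguments. Unset Strict Implicit. Unset Printing Implicit Defensive.
Import GRing.Theory Num.Theory.
Local Open Scope ring_scope.

(* Z_p is 'F_p (used with the hypothesis [prime p]). *)

Definition additively_separable (p : nat) (f : 'F_p -> 'F_p -> 'F_p) : Prop :=
  exists (g h : 'F_p -> 'F_p), forall x y, f x y = g x + h y.

Definition Pbox (p : nat) (f : 'F_p -> 'F_p -> 'F_p) (a b x y : 'F_p) : rat :=
  if a - b == f x y then (p%:R)^-1 else 0.

(* A no-communication protocol using copies of a box, with shared randomness
   r : R.  The j-th box input of each party is a function of its own input,
   the shared randomness, and the list of its own previous box outputs
   (of length j).  Each final output is a function of its own input, the
   shared randomness and all of its own box outputs. *)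
Record protocol (p n m : nat) (R : Type) := Protocol {
  alice_in  : ('I_n -> 'F_p) -> R -> seq 'F_p -> 'F_p;
  bob_in    : ('I_m -> 'F_p) -> R -> seq 'F_p -> 'F_p;
  alice_out : ('I_n -> 'F_p) -> R -> seq 'F_p -> 'F_p;
  bob_out   : ('I_m -> 'F_p) -> R -> seq 'F_p -> 'F_p
}.

(* [as_] (Alice's box outputs) and [bs] (Bob's box outputs) form a possible
   transcript (positive probability) of running protocol P with k box copies
   of P^f, on inputs x, y and shared randomness r: copy j is fed the inputs
   chosen adaptively by each party and yields (a_j, b_j) in the support of
   P^f(. , . | x_j, y_j). *)
Definition possible_transcript (p n m : nat) (R : Type)
  (f : 'F_p -> 'F_p -> 'F_p) (P : protocol p n m R) (k : nat)
  (x : 'I_n -> 'F_p) (y : 'I_m -> 'F_p) (r : R) (as_ bs : seq 'F_p) : Prop :=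
  size as_ = k /\ size bs = k /\
  forall j, (j < k)%N ->
    0 < Pbox f (nth 0 as_ j) (nth 0 bs j)
               (alice_in P x r (take j as_)) (bob_in P y r (take j bs)).

From HB Require Import structures.
From mathcomp Require Import all_boot all_order all_algebra.
From Stdlib Require Import FunctionalExtensionality.
Set Implicit Arguments. Unset Strict Implicit. Unset Printing Implicit Defensive.
Import GRing.Theory.
Local Open Scope ring_scope.

(* The proof is a deterministic protocol (no shared randomness is needed).

   For f : A x B -> V define its mixed difference
     d(u, v) = f(u, v) - f(u, 0) - f(0, v) + f(0, 0).
   It vanishes identically iff f is additively separable, and it vanishes
   whenever u = 0 or v = 0.  If one box copy is fed u by Alice and v by Bob
   and answers a - b = f(u, v), then after the local corrections
   a' = a - f(u, 0) and b' = b + f(0, v) - f(0, 0) we get a' - b' = d(u, v).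

   Since f is inseparable, pick (x1, y1) with c = d(x1, y1) <> 0.  The
   protocol uses one copy per pair (x', y') of possible inputs: Alice feeds
   x1 if x = x', else 0, and Bob feeds y1 if y = y', else 0.  The corrected
   difference of that copy is then c if (x, y) = (x', y'), else 0, so summing
   the corrected outputs with weights F(x', y') / c gives exactly F(x, y). *)

Section MixedDifference.
Variables (U W V : zmodType) (f : U -> W -> V).

Definition mixed_diff (u : U) (v : W) : V := f u v - f u 0 - f 0 v + f 0 0.

Lemma mixed_diff0_separable :
  (forall u v, mixed_diff u v = 0) -> forall u v, f u v = f u 0 + (f 0 v - f 0 0).
Proof.
move=> d0 u v; apply/eqP; rewrite -subr_eq0 -(d0 u v) /mixed_diff.
by rewrite opprD opprB !addrA addrAC.
Qed.

Lemma mixed_diff_indicator (bu bv : bool) (u : U) (v : W) :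
  mixed_diff (if bu then u else 0) (if bv then v else 0) =
  if bu && bv then mixed_diff u v else 0.
Proof.
by case: bu; case: bv; rewrite /mixed_diff //= addrAC ?subrK ?addrK subrr.
Qed.

Lemma box_correction (u : U) (v : W) (a b : V) :
  a - b = f u v -> (a - f u 0) - (b + f 0 v - f 0 0) = mixed_diff u v.
Proof.
rewrite /mixed_diff => <-; rewrite opprB opprD !addrA [RHS]addrAC.
by congr (_ - _); rewrite addrAC; congr (_ + _); exact: addrAC.
Qed.

End MixedDifference.

Lemma inseparable_mixed_diff (p : nat) (f : 'F_p -> 'F_p -> 'F_p) :
  ~ additively_separable f -> exists x1 y1, mixed_diff f x1 y1 != 0.
Proof.
move=> hf; have [/existsP[x1 /existsP[y1 d]]|/existsPn d0] :=
  boolP [exists x1, exists y1, mixed_diff f x1 y1 != 0]; first by exists x1, y1.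
case: hf; exists (fun u => f u 0), (fun v => f 0 v - f 0 0).
apply: mixed_diff0_separable => u v.
by move/existsPn: (d0 u) => /(_ v) /negPn /eqP.
Qed.

Lemma transcript_box_answer (p n m : nat) (R : Type) (f : 'F_p -> 'F_p -> 'F_p)
    (P : protocol p n m R) (k : nat) x y r (as_ bs : seq 'F_p) :
  possible_transcript f P k x y r as_ bs -> forall j, (j < k)%N ->
  nth 0 as_ j - nth 0 bs j =
    f (alice_in P x r (take j as_)) (bob_in P y r (take j bs)).
Proof.
by move=> [_ [_ box]] j /box; rewrite /Pbox; case: eqP => // _; rewrite ltxx.
Qed.

Lemma sum_enum_nth (T : finType) (V : nmodType) (x0 : T) (G : T -> V) :
  \sum_(j < #|T|) G (nth x0 (enum T) j) = \sum_(e : T) G e.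
Proof.
by rewrite (big_enum_val G); apply: eq_bigr => j _; rewrite (enum_val_nth x0).
Qed.

Section IndicatorProtocol.
Variables (p n m : nat) (f : 'F_p -> 'F_p -> 'F_p) (x1 y1 : 'F_p).
Variable F : ('I_n -> 'F_p) -> ('I_m -> 'F_p) -> 'F_p.

(* The possible input pairs; box copy number j is dedicated to [query j]. *)
Definition input_pair : finType :=
  ({ffun 'I_n -> 'F_p} * {ffun 'I_m -> 'F_p})%type.

Definition query (j : nat) : input_pair :=
  nth ([ffun=> 0], [ffun=> 0]) (enum input_pair) j.

Definition alice_query (x : 'I_n -> 'F_p) (j : nat) : 'F_p :=
  if finfun x == (query j).1 then x1 else 0.

Definition bob_query (y : 'I_m -> 'F_p) (j : nat) : 'F_p :=
  if finfun y == (query j).2 then y1 else 0.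

Definition weight (j : nat) : 'F_p :=
  F (query j).1 (query j).2 / mixed_diff f x1 y1.

Definition indicator_protocol : protocol p n m unit := Protocol
  (fun x _ s => alice_query x (size s))
  (fun y _ s => bob_query y (size s))
  (fun x _ s => \sum_(j < #|input_pair|) weight j * (nth 0 s j - f (alice_query x j) 0))
  (fun y _ s => \sum_(j < #|input_pair|)
                  weight j * (nth 0 s j + f 0 (bob_query y j) - f 0 0)).

Hypothesis mixed_diff_x1y1 : mixed_diff f x1 y1 != 0.

Lemma copy_contribution (x : 'I_n -> 'F_p) (y : 'I_m -> 'F_p) (j : nat) :
  weight j * mixed_diff f (alice_query x j) (bob_query y j) =
  if query j == (finfun x, finfun y) then F (query j).1 (query j).2 else 0.
Proof.
rewrite mixed_diff_indicator /weight; case: (query j) => qx qy /=.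
rewrite xpair_eqE ![_ == finfun _]eq_sym.
by case: (_ && _); rewrite ?mulr0 ?mulfVK.
Qed.

Lemma indicator_protocol_correct x y r (as_ bs : seq 'F_p) :
  possible_transcript f indicator_protocol #|input_pair| x y r as_ bs ->
  alice_out indicator_protocol x r as_ - bob_out indicator_protocol y r bs = F x y.
Proof.
move=> tr; have [size_as [size_bs _]] := tr.
rewrite /= -sumrB.
under eq_bigr => j _.
  rewrite -mulrBr; have := transcript_box_answer tr (ltn_ord j).
  rewrite /= !size_take size_as size_bs ltn_ord => /box_correction ->.
  rewrite copy_contribution.
  over.
rewrite (sum_enum_nth _ (fun e : input_pair =>
  if e == (finfun x, finfun y) then F e.1 e.2 else 0)) -big_mkcond big_pred1_eq /=.
by congr F; apply: functional_extensionality => i; rewrite ffunE.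
Qed.

End IndicatorProtocol.

Theorem theorem1 (p : nat) (hp : prime p) (f : 'F_p -> 'F_p -> 'F_p)
  (hf : ~ additively_separable f) (n m : nat) (hn : (1 <= n)%N) (hm : (1 <= m)%N)
  (F : ('I_n -> 'F_p) -> ('I_m -> 'F_p) -> 'F_p) :
  exists (k : nat) (R : finType) (P : protocol p n m R),
    (0 < #|R|)%N /\
    forall (x : 'I_n -> 'F_p) (y : 'I_m -> 'F_p) (r : R) (as_ bs : seq 'F_p),
      possible_transcript f P k x y r as_ bs ->
      alice_out P x r as_ - bob_out P y r bs = F x y.
Proof.
have [x1 [y1 mixed_diff_x1y1]] := inseparable_mixed_diff hf.
exists #|input_pair p n m|, unit, (indicator_protocol f x1 y1 F).
split; first by rewrite card_unit.
by move=> x y r as_ bs; apply: indicator_protocol_correct.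
Qed.
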